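(* Let $\mathcal{G}$ be a class of graphs closed under taking subgraphs. The following are equivalent: (i) there exists $d\in\mathbb{N}$ such that every graph $G\in\mathcal{G}$ is strongly $d$-degenerate; (ii) there exist $s\in\mathbb{N}$ and $k\in\mathbb{N}$ such that $K_{2,s}\notin\mathcal{G}$ and such that for every graph $H$ of minimum degree at least $k$, the $1$-subdivision of $H$ is not contained in $\mathcal{G}$.
   Context: All graphs are finite and simple. For an integer $d\ge1$, a vertex $v$ of a graph $G$ is $d$-removable in $G$ if $d_G(v)\le d$ and at most one neighbour $w$ of $v$ has $d_G(w)>d$. A graph $G$ is strongly $d$-degenerate if every non-empty subgraph $G'$ of $G$ contains a vertex which is $d$-removable in $G'$. The $1$-subdivision of $H$ is the graph obtained by replacing every edge of $H$ by a path of length $2$ through a new vertex. Membership in $\mathcal{G}$ is understood up to isomorphism. *)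

From mathcomp Require Import all_boot.
Set Implicit Arguments. Unset Strict Implicit. Unset Printing Implicit Defensive.

Record sgraph := SGraph {
  vert : finType;
  adj : rel vert;
  adj_sym : symmetric adj;
  adj_irr : irreflexive adj }.

Definition degE (V : finType) (E : rel V) (v : V) : nat := #|[set w | E v w]|.

Definition deg (G : sgraph) (v : vert G) : nat := degE (@adj G) v.

Definition subgraph_of (H G : sgraph) : Prop :=
  exists f : vert H -> vert G,
    injective f /\ forall x y, adj x y -> adj (f x) (f y).

Definition subgraph_closed (C : sgraph -> Prop) : Prop :=
  forall G H : sgraph, C G -> subgraph_of H G -> C H.

Definition removable (V : finType) (S : {set V}) (E : rel V) (d : nat) (v : V) : bool :=
  [&& v \in S, degE E v <= d & #|[set w | E v w && (d < degE E w)]| <= 1].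

Definition strongly_degenerate (d : nat) (G : sgraph) : Prop :=
  forall (S : {set vert G}) (E : rel (vert G)),
    (forall x y, E x y -> [&& x \in S, y \in S & adj x y]) ->
    symmetric E ->
    S != set0 ->
    exists v, removable S E d v.

Definition bip_adj (m n : nat) : rel ('I_m + 'I_n)%type :=
  fun x y => match x, y with
             | inl _, inr _ | inr _, inl _ => true
             | _, _ => false end.

Lemma bip_adj_sym m n : symmetric (@bip_adj m n).
Proof. by case=> x; case. Qed.

Lemma bip_adj_irr m n : irreflexive (@bip_adj m n).
Proof. by case. Qed.

Definition K (m n : nat) : sgraph := SGraph (@bip_adj_sym m n) (@bip_adj_irr m n).

Definition edge_pred (H : sgraph) : pred {set vert H} :=
  fun e => [exists x, exists y, adj x y && (e == [set x; y])].

Definition edge_t (H : sgraph) := {e : {set vert H} | edge_pred e}.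

Definition sub_adj (H : sgraph) : rel (vert H + edge_t H)%type :=
  fun x y => match x, y with
             | inl v, inr e | inr e, inl v => v \in val e
             | _, _ => false end.

Lemma sub_adj_sym H : symmetric (@sub_adj H).
Proof. by case=> x; case. Qed.

Lemma sub_adj_irr H : irreflexive (@sub_adj H).
Proof. by case. Qed.

Definition subdivision (H : sgraph) : sgraph :=
  SGraph (@sub_adj_sym H) (@sub_adj_irr H).

(* minimum degree at least k (for a graph with at least one vertex) *)
Definition mindeg_ge (H : sgraph) (k : nat) : Prop :=
  forall v : vert H, k <= deg v.

(* (i) => (ii): in K_{2,d+1}, and in the 1-subdivision of a graph of minimum
   degree > d, every vertex has degree > d or two neighbours of degree > d, so
   no vertex is d-removable.
   (ii) => (i): take a subgraph without d-removable vertex, d large, and call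
   the vertices of degree > d heavy.  Every light vertex has two heavy
   neighbours, so if the light vertices outnumber the heavy ones by a large
   factor, the heavy set X and the light set M give many vertices outside X
   with two neighbours in X each.  Otherwise the average degree is large, and
   a potential argument inside a subgraph of large minimum degree yields such
   X and M as well.
   Let every vertex of M choose two neighbours in X: either some pair is
   chosen s times, which gives K_{2,s}, or the chosen pairs form a graph on X
   of average degree > 2k, whose subgraph of minimum degree > k has its
   1-subdivision in G, the vertices of M serving as subdivision vertices. *)

From mathcomp Require Import all_boot zify.

Set Implicit Arguments. Unset Strict Implicit. Unset Printing Implicit Defensive.

Lemma not_strongly_degenerate d (G : sgraph) : 0 < #|vert G| ->
  (forall v : vert G, d < deg v \/ 1 < #|[set w | adj v w && (d < deg w)]|) ->
  ~ strongly_degenerate d G.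
Proof.
move=> /card_gt0P [v0 _] large Gsd.
have [||v /and3P [_ small_v few_large]] := Gsd setT (@adj G) _ (@adj_sym G).
- by move=> x y ->; rewrite !inE.
- by apply/set0Pn; exists v0; rewrite inE.
by case: (large v); rewrite /deg ltnNge ?small_v ?few_large.
Qed.

Lemma K2_not_strongly_degenerate d : ~ strongly_degenerate d (K 2 d.+1).
Proof.
have deg_inl (i : 'I_2) : d < deg (inl i : vert (K 2 d.+1)).
  apply: leq_trans (_ : #|[set inr j | j : 'I_d.+1]| <= _).
    by rewrite card_imset ?card_ord //; exact: inr_inj.
  by apply/subset_leq_card/subsetP => _ /imsetP [j _ ->]; rewrite inE.
apply: not_strongly_degenerate => [|[i|j]]; first by apply/card_gt0P; exists (inl ord0).
- by left.
- by right; apply/card_gt1P; exists (inl ord0), (inl ord_max); rewrite !inE /= !deg_inl.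
Qed.

Lemma deg_subdivision (H : sgraph) (u : vert H) : deg u <= deg (inl u : vert (subdivision H)).
Proof.
pose g (z : vert (subdivision H)) := if z is inr e then odflt u [pick w in val e | w != u] else u.
apply: leq_trans (leq_imset_card g _); apply/subset_leq_card/subsetP => w; rewrite inE => uw.
have uw_edge : edge_pred [set u; w].
  by apply/existsP; exists u; apply/existsP; exists w; rewrite uw eqxx.
apply/imsetP; exists (inr (exist (@edge_pred H) _ uw_edge)); first by rewrite inE /= set21.
have wu : w != u by apply: contraTneq uw => ->; rewrite adj_irr.
by rewrite /g /=; case: pickP => [w' /andP [/set2P [->|->]] | /(_ w)]; rewrite ?eqxx ?wu ?set22.
Qed.

Lemma subdivision_not_strongly_degenerate d (H : sgraph) :
  0 < #|vert H| -> mindeg_ge H d.+1 -> ~ strongly_degenerate d (subdivision H).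
Proof.
move=> /card_gt0P [u0 _] Hmin.
have deg_inl u : d < deg (inl u : vert (subdivision H)).
  exact: leq_trans (Hmin u) (deg_subdivision u).
apply: not_strongly_degenerate => [|[u|e]]; first by apply/card_gt0P; exists (inl u0).
- by left.
- right; case/existsP: (valP e) => x /existsP [y /andP [xy /eqP e_xy]].
  apply/card_gt1P; exists (inl x), (inl y); rewrite !inE /= !deg_inl e_xy set21 set22.
  by split=> //; apply: contraTneq xy => -[->]; rewrite adj_irr.
Qed.

Lemma sum_bool_card (T : finType) (A : {pred T}) (P : pred T) :
  \sum_(a in A) P a = #|[set a in A | P a]|.
Proof.
rewrite -sum1_card big_mkcond [RHS]big_mkcond /=; apply: eq_bigr => a _.
by rewrite !inE; case: (a \in A); case: (P a).
Qed.

Section NeighbourCount.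

Variables (V : finType) (E : rel V).

Definition deg_in (Y : {set V}) (v : V) : nat := #|[set w in Y | E v w]|.

Lemma deg_in0 v : deg_in set0 v = 0.
Proof. by apply/eqP; rewrite cards_eq0; apply/eqP/setP => w; rewrite !inE. Qed.

Lemma deg_inD1 (X : {set V}) x v : x \in X -> deg_in X v = deg_in (X :\ x) v + E v x.
Proof.
move=> xX; rewrite /deg_in (cardsD1 x) addnC inE xX; congr (_ + _).
by apply: eq_card => w; rewrite !inE andbA.
Qed.

Lemma sum_deg_in_card (X : {set V}) :
  \sum_(a in X) deg_in X a = #|[set p | [&& p.1 \in X, p.2 \in X & E p.1 p.2]]|.
Proof.
under eq_bigr => a _ do rewrite /deg_in -sum_bool_card.
rewrite pair_big /= (sum_bool_card [pred p : V * V | (p.1 \in X) && (p.2 \in X)]).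
by apply: eq_card => p; rewrite !inE andbA.
Qed.

Hypotheses (Esym : symmetric E) (Eirr : irreflexive E).

Lemma sum_deg_inD1 (X : {set V}) x : x \in X ->
  \sum_(a in X) deg_in X a = (deg_in X x).*2 + \sum_(a in X :\ x) deg_in (X :\ x) a.
Proof.
move=> xX; rewrite (big_setD1 x xX) -addnn -addnA; congr (_ + _).
under eq_bigr => a _ do rewrite (deg_inD1 a xX).
rewrite big_split addnC sum_bool_card; congr (_ + _).
apply: eq_card => w; rewrite !inE Esym.
by case: (w =P x) => [->|]; rewrite ?Eirr ?andbF.
Qed.

(* Repeatedly deleting a vertex of degree at most [k] lowers the degree sum by
   at most [2k], so it cannot empty the set. *)
Lemma dense_subset k (X : {set V}) : k.*2 * #|X| < \sum_(a in X) deg_in X a ->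
  exists2 Y : {set V}, Y \subset X & Y != set0 /\ {in Y, forall y, k < deg_in Y y}.
Proof.
move Xn: #|X| => n; elim: n X Xn => [|n IHn] X Xn sumX.
  by move: sumX; move/eqP: Xn; rewrite cards_eq0 => /eqP ->; rewrite big_set0.
have [/exists_inP [x xX degx] | /exists_inPn dense] := boolP [exists x in X, deg_in X x <= k].
  have Xxn : #|X :\ x| = n by move: Xn; rewrite (cardsD1 x) xX => -[].
  have [|Y YXx Ydense] := IHn _ Xxn.
    by move: sumX; rewrite (sum_deg_inD1 xX) -!muln2; nia.
  by exists Y => //; apply: subset_trans YXx (subsetDl X _).
exists X => //; split=> [|y /dense]; last by rewrite ltnNge.
by apply: contraTneq sumX => ->; rewrite big_set0.
Qed.

End NeighbourCount.

Lemma deg_in_subrel (V : finType) (E E' : rel V) (X : {set V}) v :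
  subrel E E' -> deg_in E X v <= deg_in E' X v.
Proof.
move=> EE'; apply: subset_leq_card; apply/subsetP => w.
by rewrite !inE => /andP [-> /EE'].
Qed.

Lemma minn_addn_bool c (b : bool) : minn (c + b) 2 = minn c 2 + (b && (c < 2)).
Proof. by case: b; case: c => [|[|c]]. Qed.

Section DoublyAttached.

Variables (V : finType) (E : rel V) (Y : {set V}) (d N : nat).
Hypotheses (Esym : symmetric E) (Y0 : Y != set0) (d_large : 8 * N + 10 <= d)
  (Ymin : {in Y, forall y, d <= deg_in E Y y}).
Implicit Type X : {set V}.

Let Psi X := \sum_(q in Y) minn (deg_in E X q) 2.
Let potential X := (Psi X).*2 + (d - 2) * (#|Y| - #|X|).
Let gain X x := #|[set q in Y | E x q && (deg_in E X q < 2)]|.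

Lemma Psi_setU1 X x : x \notin X -> Psi (x |: X) = Psi X + gain X x.
Proof.
move=> xX; rewrite /Psi.
under eq_bigr => q _ do rewrite (deg_inD1 E q (setU11 x X)) setU1K // minn_addn_bool.
by rewrite big_split sum_bool_card; congr (_ + _); apply: eq_card => q; rewrite !inE Esym.
Qed.

Section Maximiser.

Variable X : {set V}.
Hypotheses (XY : X \subset Y) (Xmax : forall X', X' \subset Y -> potential X' <= potential X).

Let lonely := [set q in Y | deg_in E X q < 2].
Let attached := [set q in Y :\: X | 2 <= deg_in E X q].

Lemma sparse_maximiser : (d - 2) * #|X| <= (Psi X).*2.
Proof.
have Psi0 : Psi set0 = 0 by rewrite /Psi big1 // => q _; rewrite deg_in0.
have := Xmax (sub0set Y); have := subset_leq_card XY.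
by rewrite /potential Psi0 cards0 subn0; nia.
Qed.

Lemma lonely_large : #|attached| <= N * #|X| -> #|Y| <= 2 * #|lonely|.
Proof.
move=> attached_small.
have Psi_le : Psi X <= 2 * #|Y|.
  rewrite mulnC -sum_nat_const; apply: leq_sum => q _; exact: geq_minr.
have Y_cover : #|Y| <= #|lonely| + #|attached| + #|X|.
  rewrite -addnA -(cardsID lonely Y) (setIidPr _); last by apply/subsetP => q; rewrite inE => /andP [].
  rewrite leq_add2l; apply: leq_trans (leq_card_setU _ _); apply: subset_leq_card.
  apply/subsetP => q; rewrite !inE; case: (q \in Y) => //=.
  by rewrite ltnNge negbK !andbT; case: (q \in X); rewrite ?orbT ?orbF.
have := sparse_maximiser.
have : 8 * N.+1 * #|X| <= (d - 2) * #|X| by apply: leq_mul => //; lia.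
by move: Psi_le Y_cover attached_small; rewrite -!muln2; nia.
Qed.

Lemma gain_small x : x \in Y :\: X -> (gain X x).*2 <= d - 2.
Proof.
rewrite inE => /andP [xX xY].
have xXY : x |: X \subset Y by rewrite subUset sub1set xY XY.
have X_lt : #|X| < #|Y| by apply: proper_card; apply/properP; split=> //; exists x.
have := Xmax xXY; rewrite /potential Psi_setU1 // cardsU1 xX.
by move: X_lt; rewrite -!muln2; nia.
Qed.

Lemma sum_gain_large : (d - 1) * #|lonely| <= \sum_(x in Y :\: X) gain X x.
Proof.
under eq_bigr => x _ do rewrite /gain -sum_bool_card.
rewrite exchange_big /= (bigID (mem lonely)) /= -[X in X <= _]addn0 mulnC.
apply: leq_add; last exact: leq0n.
rewrite -sum_nat_const [X in _ <= X](eq_bigl (mem lonely)); last first.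
  by move=> q; rewrite !inE andb_idl // => /andP [].
apply: leq_sum => q; rewrite inE => /andP [qY q_lonely].
rewrite sum_bool_card.
have : deg_in E Y q <= #|[set x in Y :\: X | E x q && (deg_in E X q < 2)]| + deg_in E X q.
  rewrite q_lonely; apply: leq_trans (leq_card_setU _ _); apply: subset_leq_card.
  apply/subsetP => w; rewrite !inE Esym andbT.
  by case: (w \in X); [case/andP | rewrite orbF].
by move: (Ymin qY) q_lonely; lia.
Qed.

Lemma maximiser_attached : #|attached| <= N * #|X| -> False.
Proof.
move/lonely_large => Y_le.
have sum_le : (\sum_(x in Y :\: X) gain X x).*2 <= (d - 2) * #|Y|.
  rewrite -mul2n big_distrr /=; apply: leq_trans (_ : \sum_(x in Y :\: X) (d - 2) <= _).
    by apply: leq_sum => x /gain_small; rewrite mul2n.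
  by rewrite sum_nat_const mulnC leq_mul2l subset_leq_card ?subsetDl ?orbT.
have : 0 < #|Y| by rewrite card_gt0.
by move: sum_le sum_gain_large; rewrite -!muln2; nia.
Qed.

End Maximiser.

(* Maximise the potential; if the attached vertices were few, adding a vertex
   with many lonely neighbours would increase it. *)
Lemma doubly_attached_subset : exists X M : {set V},
  [/\ X != set0, {in M, forall m, m \notin X}, {in M, forall m, 2 <= deg_in E X m}
    & N * #|X| <= #|M|].
Proof.
have [X XY Xmax] := @arg_maxnP _ set0 (fun X : {set V} => X \subset Y) potential (sub0set Y).
set M := [set q in Y :\: X | 2 <= deg_in E X q].
suff [X0 M_large] : X != set0 /\ N * #|X| <= #|M|.
  by exists X, M; split=> // m; rewrite !inE => /andP [] // /andP [].
have [X0 | X0] := eqVneq X set0.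
  case: (maximiser_attached XY Xmax); rewrite -/M (_ : M = set0) ?cards0 //.
  by apply/setP => q; rewrite !inE X0 deg_in0 andbF.
split=> //; rewrite leqNgt; apply/negP => /ltnW; exact: maximiser_attached.
Qed.

End DoublyAttached.

Lemma K2_subgraph (G : sgraph) s (a b : vert G) (F : {set vert G}) :
  a != b -> s <= #|F| -> {in F, forall m, adj m a && adj m b} -> subgraph_of (K 2 s) G.
Proof.
move=> ab sF F_ab.
have F_notab m : m \in F -> (m != a) && (m != b).
  by move/F_ab/andP => [ma mb]; apply/andP; split; apply: contraTneq isT => e;
     [move: ma | move: mb]; rewrite e adj_irr.
pose f (z : vert (K 2 s)) := match z with
  | inl i => if val i == 0 then a else b
  | inr j => @enum_val _ (mem F) (widen_ord sF j) end.
have fF j : f (inr j) \in F by apply: enum_valP.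
exists f; split=> [[i|j] [i'|j'] /= e | [i|j] [i'|j'] //= _].
- apply/congr1/val_inj; move: e.
  by case: i i' => [[|[|?]] ?] [[|[|?]] ?] //= e; move: ab; rewrite e eqxx.
- by have /F_notab := fF j'; rewrite /= -e; case: ifP; rewrite eqxx ?andbF.
- by have /F_notab := fF j; rewrite /= e; case: ifP; rewrite eqxx ?andbF.
- by move/enum_val_inj/(congr1 val): e => eq_j; congr inr; apply: val_inj.
- by have /F_ab/andP [ja jb] := fF j'; rewrite adj_sym; case: ifP.
- by have /F_ab/andP [ja jb] := fF j; case: ifP.
Qed.

Lemma subdivision_subgraph (H G : sgraph) (f : vert H -> vert G) (mid : edge_t H -> vert G) :
  injective f -> injective mid -> (forall u e, f u != mid e) ->
  (forall u (e : edge_t H), u \in val e -> adj (f u) (mid e)) ->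
  subgraph_of (subdivision H) G.
Proof.
move=> f_inj mid_inj f_mid f_mid_adj.
exists (fun z => match z with inl u => f u | inr e => mid e end).
split=> [[u|e] [u'|e'] /= eq_fz | [u|e] [u'|e'] //= ue].
- by rewrite (f_inj _ _ eq_fz).
- by move: (f_mid u e'); rewrite eq_fz eqxx.
- by move: (f_mid u' e); rewrite eq_fz eqxx.
- by rewrite (mid_inj _ _ eq_fz).
- exact: f_mid_adj.
- by rewrite adj_sym; apply: f_mid_adj.
Qed.

Section Induced.

Variables (V : finType) (R : rel V) (Rsym : symmetric R) (Rirr : irreflexive R).
Variable Y : {set V}.

Definition induced_rel : rel {x | x \in Y} := fun u v => R (val u) (val v).

Lemma induced_rel_sym : symmetric induced_rel.
Proof. by move=> u v; apply: Rsym. Qed.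

Lemma induced_rel_irr : irreflexive induced_rel.
Proof. by move=> u; apply: Rirr. Qed.

Definition induced : sgraph := SGraph induced_rel_sym induced_rel_irr.

Lemma deg_induced (u : vert induced) : deg u = deg_in R Y (val u).
Proof.
rewrite /deg /degE -(card_imset _ val_inj); apply: eq_card => w; rewrite inE.
apply/imsetP/andP => [[v] | [wY Rw]]; first by rewrite inE => Rv ->; rewrite (valP v).
by exists (exist _ w wY); rewrite ?inE.
Qed.

End Induced.

Section TwoNeighbours.

Variables (G : sgraph) (X M : {set vert G}).
Hypotheses (MX : {in M, forall m, m \notin X}) (M2 : {in M, forall m, 2 <= deg_in (@adj G) X m}).

Let nbX (m : vert G) := [set w in X | adj m w].

Let pair m := odflt set0 [pick P : {set vert G} | (P \subset nbX m) && (#|P| == 2)].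

Lemma pair_spec m : m \in M -> pair m \subset nbX m /\ #|pair m| = 2.
Proof.
move=> mM; rewrite /pair; case: pickP => [P /andP [-> /eqP] // | no_pair].
have /card_gt1P [a [b [aN bN ab]]] := M2 mM.
have /negP [] := no_pair [set a; b].
by rewrite cards2 ab andbT; apply/subsetP => w /set2P [] ->.
Qed.

Lemma pair_fibre_K2 s m : m \in M ->
  s <= #|[set m' in M | pair m' == pair m]| -> subgraph_of (K 2 s) G.
Proof.
move=> mM; have [_ /eqP/cards2P [a [b [ab pair_ab]]]] := pair_spec mM.
move/(K2_subgraph ab); apply=> m'; rewrite inE => /andP [m'M /eqP].
rewrite pair_ab => pair_m'; have [+ _] := pair_spec m'M.
by rewrite pair_m' subUset !sub1set !inE => /andP [/andP [_ ->] /andP [_ ->]].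
Qed.

Lemma card_le_pairs s : ~ subgraph_of (K 2 s) G -> #|M| <= s * #|pair @: M|.
Proof.
move=> noK; rewrite -sum1_card (partition_big_imset pair) mulnC -sum_nat_const.
apply: leq_sum => _ /imsetP [m mM ->]; rewrite sum1_card leqNgt.
apply/negP => /ltnW fibre_large; apply: noK; apply: (pair_fibre_K2 mM).
by apply: leq_trans fibre_large _; apply: subset_leq_card; apply/subsetP => m'; rewrite !inE.
Qed.

Let R a b := (a != b) && [exists m in M, pair m == [set a; b]].

Lemma R_sym : symmetric R.
Proof. by move=> a b; rewrite /R eq_sym setUC. Qed.

Lemma R_irr : irreflexive R.
Proof. by move=> a; rewrite /R eqxx. Qed.

Lemma card_pairs_le : #|pair @: M| <= \sum_(a in X) deg_in R X a.
Proof.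
rewrite sum_deg_in_card; apply: leq_trans (leq_imset_card (fun p => [set p.1; p.2]) _).
apply: subset_leq_card; apply/subsetP => _ /imsetP [m mM ->].
have [+ /eqP/cards2P [a [b [ab pair_ab]]]] := pair_spec mM.
rewrite pair_ab subUset !sub1set !inE => /andP [/andP [aX _] /andP [bX _]].
apply/imsetP; exists (a, b) => //=; rewrite inE /= aX bX /R ab.
by apply/exists_inP; exists m; rewrite // pair_ab.
Qed.

Lemma subdivision_pairs_subgraph (Y : {set vert G}) :
  Y \subset X -> subgraph_of (subdivision (induced R_sym R_irr Y)) G.
Proof.
move=> YX; set H := induced R_sym R_irr Y.
have mid_spec (e : edge_t H) : exists m, (m \in M) && (pair m == val @: val e).
  case/existsP: (valP e) => u /existsP [v /andP [/andP [_] /exists_inP [m mM pair_m] /eqP ->]].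
  by exists m; rewrite mM imsetU !imset_set1.
pose mid e := xchoose (mid_spec e).
have [midM pair_mid] : (forall e, mid e \in M) /\ (forall e, pair (mid e) = val @: val e).
  by split=> e; have /andP [? /eqP] := xchooseP (mid_spec e).
apply: (@subdivision_subgraph H G (fun u => val u) mid); first exact: val_inj.
- move=> e e' /(congr1 pair); rewrite !pair_mid => /(imset_inj val_inj).
  exact: val_inj.
- move=> u e; apply: contraTneq (MX (midM e)) => <-.
  by rewrite negbK (subsetP YX _ (valP u)).
- move=> u e ue; have [+ _] := pair_spec (midM e); rewrite pair_mid.
  by move/subsetP/(_ _ (imset_f val ue)); rewrite inE adj_sym => /andP [].
Qed.

Lemma subdivision_of_K2_free s k : X != set0 -> (k.*2 * s + 1) * #|X| <= #|M| ->
  ~ subgraph_of (K 2 s) G ->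
  exists H, [/\ 0 < #|vert H|, mindeg_ge H k & subgraph_of (subdivision H) G].
Proof.
move=> X0 M_large /card_le_pairs M_le.
have dense : k.*2 * #|X| < \sum_(a in X) deg_in R X a.
  have := card_pairs_le; have : 0 < #|X| by rewrite card_gt0.
  by move: M_large M_le; nia.
have [Y YX [/set0Pn [y yY] Ymin]] := dense_subset R_sym R_irr dense.
exists (induced R_sym R_irr Y); split; last exact: subdivision_pairs_subgraph.
- by apply/card_gt0P; exists (exist _ y yY).
- by move=> u; rewrite deg_induced; apply/ltnW/Ymin/(valP u).
Qed.

End TwoNeighbours.

Definition heavy (V : finType) (S : {set V}) (E : rel V) d := [set v in S | d < degE E v].

Section NoRemovable.

Variables (V : finType) (S : {set V}) (E : rel V) (d : nat).
Hypothesis ES : forall x y, E x y -> y \in S.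

Lemma degE_deg_in v : degE E v = deg_in E S v.
Proof. by apply: eq_card => w; rewrite !inE andb_idl // => /ES. Qed.

Lemma deg_in_heavy : {in S, forall v, ~~ removable S E d v} ->
  {in S :\: heavy S E d, forall v, 2 <= deg_in E (heavy S E d) v}.
Proof.
move=> no_rem v; rewrite !inE => /andP [/nandP [/negbTE -> // | light] vS].
have := no_rem v vS; rewrite /removable vS leqNgt light -ltnNge /= => two_heavy.
apply: leq_trans two_heavy _; apply/subset_leq_card/subsetP => w; rewrite !inE.
by case/andP => vw ->; rewrite vw (ES vw).
Qed.

End NoRemovable.

Section ForbiddenSubgraphs.

Variables (G : sgraph) (s k : nat).
Hypotheses (noK2 : ~ subgraph_of (K 2 s) G)
  (noSub : forall H, 0 < #|vert H| -> mindeg_ge H k -> ~ subgraph_of (subdivision H) G).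

Local Notation N := (k.*2 * s + 1).

Lemma few_doubly_attached (X M : {set vert G}) : X != set0 -> {in M, forall m, m \notin X} ->
  {in M, forall m, 2 <= deg_in (@adj G) X m} -> #|M| < N * #|X|.
Proof.
move=> X0 MX M2; rewrite ltnNge; apply/negP => M_large.
have [H [H0 Hmin Hsub]] := subdivision_of_K2_free MX M2 X0 M_large noK2.
exact: noSub H0 Hmin Hsub.
Qed.

Section SubRelation.

Variable E : rel (vert G).
Hypotheses (EG : subrel E (@adj G)) (Esym : symmetric E).

Lemma bounded_min_degree (Y : {set vert G}) :
  Y != set0 -> ~ {in Y, forall y, 8 * N + 10 <= deg_in E Y y}.
Proof.
move=> Y0 Ymin.
have [X [M [X0 MX M2 M_large]]] := doubly_attached_subset Esym Y0 (leqnn _) Ymin.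
have := few_doubly_attached X0 MX (fun m mM => leq_trans (M2 m mM) (deg_in_subrel _ _ EG)).
by rewrite ltnNge M_large.
Qed.

Lemma bounded_average_degree (S : {set vert G}) :
  \sum_(v in S) deg_in E S v <= (8 * N + 9).*2 * #|S|.
Proof.
have Eirr : irreflexive E by move=> x; apply: contraTF isT => /EG; rewrite adj_irr.
rewrite leqNgt; apply/negP => /(dense_subset Esym Eirr) [Y _ [Y0 Ymin]].
by apply: (bounded_min_degree Y0) => y /Ymin; lia.
Qed.

End SubRelation.

Lemma strongly_degenerate_of_forbidden : strongly_degenerate ((8 * N + 9).*2 * N.+1) G.
Proof.
move=> S E E_S Esym S0; set d := _ * _.
have [/existsP // | /existsPn no_rem] := boolP [exists v, removable S E d v].
have EG : subrel E (@adj G) by move=> x y /E_S /and3P [].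
have ES x y : E x y -> y \in S by move/E_S/and3P => [].
set B := heavy S E d.
have BS : B \subset S by apply/subsetP => v; rewrite inE => /andP [].
have light_attached := deg_in_heavy ES (fun v _ => no_rem v).
have B0 : B != set0.
  have [v vS] := set0Pn _ S0; apply/set0Pn; have [vB | vB] := boolP (v \in B); first by exists v.
  have /card_gt0P [w] : 0 < deg_in E B v by apply: leq_trans (light_attached v _); rewrite // inE vB.
  by rewrite inE => /andP [wB _]; exists w.
have light_few : #|S :\: B| < N * #|B|.
  apply: few_doubly_attached B0 _ _ => [v | v /light_attached]; first by rewrite inE => /andP [].
  by move/leq_trans; apply; apply: deg_in_subrel.
have heavy_sum : d.+1 * #|B| <= \sum_(v in S) deg_in E S v.
  rewrite (big_setID B) (setIidPr BS) /=; apply: leq_trans (leq_addr _ _).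
  rewrite mulnC -sum_nat_const; apply: leq_sum => v.
  by rewrite inE -(degE_deg_in ES) => /andP [].
have := bounded_average_degree EG Esym S; have : 0 < #|B| by rewrite card_gt0.
rewrite -(cardsID B S) (setIidPr BS) /d; move: light_few heavy_sum.
by rewrite -!muln2; nia.
Qed.

End ForbiddenSubgraphs.

Theorem theorem1p2 (C : sgraph -> Prop) :
  subgraph_closed C ->
  ((exists d : nat, forall G : sgraph, C G -> strongly_degenerate d G) <->
   (exists s k : nat,
      ~ C (K 2 s) /\
      forall H : sgraph, 0 < #|vert H| -> mindeg_ge H k -> ~ C (subdivision H))).
Proof.
move=> C_closed; split=> [[d C_sd] | [s [k [noK2 noSub]]]].
  exists d.+1, d.+1; split=> [/C_sd | H H0 Hmin /C_sd]; first exact: K2_not_strongly_degenerate.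
  exact: subdivision_not_strongly_degenerate.
eexists => G CG; apply: strongly_degenerate_of_forbidden => [/(C_closed _ _ CG) | H H0 Hmin].
  exact: noK2.
by move/(C_closed _ _ CG); apply: noSub.
Qed.
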